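(* The generating function $$F_{(231,312)}(x,p,q,u,v,s,t)=\sum_{n\ge0}\ \sum_{\pi\in S_n(231,312)} x^n p^{\operatorname{asc}(\pi)}q^{\operatorname{des}(\pi)}u^{\operatorname{lrmax}(\pi)}v^{\operatorname{rlmax}(\pi)}s^{\operatorname{lrmin}(\pi)}t^{\operatorname{rlmin}(\pi)}$$ is equal to $\dfrac{A}{(1-qsx)(1-qx-ptux)(1-qvx)(1-qsvx)}$, where $$\begin{aligned}A={}&1 - p t u x + s t u v x + q^4 s^2 v^2 x^4 + q^3 s v x^3 \bigl(-1 - v + s (-1 + v (-1 + (-1 + p) t u x))\bigr)\\ &- q x \bigl(1 + v - p t u v x + s^2 t u v x (1 + p t u (-1 + v) x) + s (1 + v - p t u x - (-1 + p) t u v x + p t^2 u^2 v x^2 + t u v^2 x (1 - p t u x))\bigr)\\ &+ q^2 x^2 \bigl(v + s^2 v (1 + t u (1 - p + v) x) + s (1 + v^2 (1 - (-1 + p) t u x) + v (2 - p t u x))\bigr).\end{aligned}$$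
   Context: For $n\ge 0$, $S_n$ denotes the set of permutations $\pi=\pi_1\cdots\pi_n$ of $[n]=\{1,\dots,n\}$ ($S_0$ consists of the empty permutation, for which all statistics are $0$). $\pi$ avoids a pattern $\tau\in S_k$ if no subsequence $\pi_{i_1}\cdots\pi_{i_k}$ ($i_1<\dots<i_k$) satisfies $\pi_{i_a}<\pi_{i_b}\iff\tau_a<\tau_b$; $S_n(\tau,\rho)$ is the set of permutations in $S_n$ avoiding both $\tau$ and $\rho$. $\operatorname{asc}(\pi)$ (resp. $\operatorname{des}(\pi)$) is the number of $i\in[n-1]$ with $\pi_i<\pi_{i+1}$ (resp. $\pi_i>\pi_{i+1}$). $\pi_i$ is a left-to-right maximum (resp. minimum) if it is larger (resp. smaller) than every $\pi_j$ with $j<i$, and a right-to-left maximum (resp. minimum) if it is larger (resp. smaller) than every $\pi_j$ with $j>i$; $\operatorname{lrmax},\operatorname{lrmin},\operatorname{rlmax},\operatorname{rlmin}$ count these. *)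

From HB Require Import structures.
From mathcomp Require Import all_boot all_order all_algebra all_fingroup.
Set Implicit Arguments. Unset Strict Implicit. Unset Printing Implicit Defensive.
Import GRing.Theory.
Local Open Scope ring_scope.

(* One-line notation of a permutation s of 'I_n (values 0..n-1; shifting all
   values by 1 changes no statistic and no pattern occurrence). *)
Definition word n (s : 'S_n) : seq nat := [seq val (s i) | i <- enum 'I_n].

Definition contains n (s : 'S_n) (tau : seq nat) : bool :=
  [exists f : {ffun 'I_(size tau) -> 'I_n},
     [forall a : 'I_(size tau), forall b : 'I_(size tau),
        ((a < b)%N ==> (f a < f b)%N) &&
        (((s (f a)) < (s (f b)))%N == (nth 0 tau a < nth 0 tau b)%N)]].

Definition avoids n (s : 'S_n) (tau : seq nat) : bool := ~~ contains s tau.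

Definition asc n (s : 'S_n) : nat :=
  let w := word s in count (fun i => nth 0 w i < nth 0 w i.+1)%N (iota 0 n.-1).
Definition des n (s : 'S_n) : nat :=
  let w := word s in count (fun i => nth 0 w i > nth 0 w i.+1)%N (iota 0 n.-1).
Definition lrmax n (s : 'S_n) : nat :=
  let w := word s in
  count (fun i => all (fun j => nth 0 w j < nth 0 w i)%N (iota 0 i)) (iota 0 n).
Definition lrmin n (s : 'S_n) : nat :=
  let w := word s in
  count (fun i => all (fun j => nth 0 w j > nth 0 w i)%N (iota 0 i)) (iota 0 n).
Definition rlmax n (s : 'S_n) : nat :=
  let w := word s in
  count (fun i => all (fun j => nth 0 w j < nth 0 w i)%N (iota i.+1 (n - i.+1)))
        (iota 0 n).
Definition rlmin n (s : 'S_n) : nat :=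
  let w := word s in
  count (fun i => all (fun j => nth 0 w j > nth 0 w i)%N (iota i.+1 (n - i.+1)))
        (iota 0 n).

Definition Fcoef (R : comNzRingType) (p q u v s t : R) (n : nat) : R :=
  \sum_(pi : 'S_n | avoids pi [:: 2; 3; 1]%N && avoids pi [:: 3; 1; 2]%N)
     p ^+ asc pi * q ^+ des pi * u ^+ lrmax pi * v ^+ rlmax pi
       * s ^+ lrmin pi * t ^+ rlmin pi.

Definition Dpoly (R : comNzRingType) (p q u v s t : R) : {poly R} :=
  let x := 'X in
  let p := p%:P in let q := q%:P in let u := u%:P in
  let v := v%:P in let s := s%:P in let t := t%:P in
  (1 - q * s * x) * (1 - q * x - p * t * u * x) * (1 - q * v * x) * (1 - q * s * v * x).

Definition Apoly (R : comNzRingType) (p q u v s t : R) : {poly R} :=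
  let x := 'X in
  let p := p%:P in let q := q%:P in let u := u%:P in
  let v := v%:P in let s := s%:P in let t := t%:P in
  1 - p * t * u * x + s * t * u * v * x + q ^+ 4 * s ^+ 2 * v ^+ 2 * x ^+ 4
  + q ^+ 3 * s * v * x ^+ 3 * (- 1 - v + s * (- 1 + v * (- 1 + (- 1 + p) * t * u * x)))
  - q * x * (1 + v - p * t * u * v * x + s ^+ 2 * t * u * v * x * (1 + p * t * u * (- 1 + v) * x)
             + s * (1 + v - p * t * u * x - (- 1 + p) * t * u * v * x
                    + p * t ^+ 2 * u ^+ 2 * v * x ^+ 2 + t * u * v ^+ 2 * x * (1 - p * t * u * x)))
  + q ^+ 2 * x ^+ 2 * (v + s ^+ 2 * v * (1 + t * u * (1 - p + v) * x)
             + s * (1 + v ^+ 2 * (1 - (- 1 + p) * t * u * x) + v * (2 - p * t * u * x))).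

(* A permutation avoids 231 and 312 iff it is layered: a concatenation of
   decreasing runs of consecutive values, each run lying above the previous
   ones.  Removing the first run, of length c + 1, leaves an arbitrary layered
   permutation.  The run adds c descents, one ascent into the rest, one
   left-to-right maximum and one right-to-left minimum; it carries all c + 1
   left-to-right minima (those of the rest no longer count) and keeps the
   right-to-left maxima of the rest.  Writing F_n(s) for the coefficient of
   x^n, this gives
     F_(n+1)(s) = u t q^n (s v)^(n+1) + sum_(c<n) s^(c+1) q^c p u t F_(n-c)(1),
   i.e. F(s) - 1 = t u s v x / (1 - q s v x) + p u t s x / (1 - q s x) (F(1) - 1).
   Solving at s = 1 and then for general s yields A / D.  As the statement is
   about a single coefficient, all series are truncated polynomials compared
   modulo x^(N+1). *)

From mathcomp Require Import all_boot all_order all_algebra all_fingroup.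
From mathcomp Require Import zify ring.
From Corelib Require Import Setoid Morphisms.
Import GRing.Theory.
Set Implicit Arguments. Unset Strict Implicit. Unset Printing Implicit Defensive.

Definition wnth n (s : 'S_n) (i : nat) : nat := nth 0 (word s) i.

Lemma wnth_ord n (s : 'S_n) (i : 'I_n) : wnth s i = s i.
Proof. by rewrite /wnth /word (nth_map i 0) ?size_enum_ord // nth_ord_enum. Qed.

Lemma wnth_lt n (s : 'S_n) i : i < n -> wnth s i < n.
Proof. by move=> lt_in; rewrite (wnth_ord s (Ordinal lt_in)). Qed.

Lemma wnth_inj n (s : 'S_n) i j : i < n -> j < n -> wnth s i = wnth s j -> i = j.
Proof.
move=> lt_in lt_jn; rewrite (wnth_ord s (Ordinal lt_in)) (wnth_ord s (Ordinal lt_jn)).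
by move/val_inj/perm_inj => [].
Qed.

Lemma wnth_onto n (s : 'S_n) y : y < n -> exists2 k, k < n & wnth s k = y.
Proof. by move=> lt_yn; exists (s^-1 (Ordinal lt_yn))%g; rewrite ?wnth_ord ?permKV. Qed.

Lemma eq_perm_wnth n (s1 s2 : 'S_n) :
  (forall i, i < n -> wnth s1 i = wnth s2 i) -> s1 = s2.
Proof. by move=> eq_s; apply/permP => i; apply/val_inj; rewrite /= -!wnth_ord eq_s. Qed.

Section PermOfFun.
Variables (n : nat) (g : nat -> nat).
Hypothesis g_lt : forall i, i < n -> g i < n.
Hypothesis g_inj : forall i j, i < n -> j < n -> g i = g j -> i = j.

Definition ord_fun (i : 'I_n) : 'I_n := Ordinal (g_lt (ltn_ord i)).

Lemma ord_fun_inj : injective ord_fun.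
Proof. by move=> a b /(congr1 val) /g_inj eq_ab; apply/val_inj/eq_ab. Qed.

Definition perm_of_fun : 'S_n := perm ord_fun_inj.

Lemma wnth_perm_of_fun i : i < n -> wnth perm_of_fun i = g i.
Proof. by move=> lt_in; rewrite (wnth_ord _ (Ordinal lt_in)) permE. Qed.
End PermOfFun.

(* Every inversion lies inside one decreasing run of consecutive values, along
   which [w i + i] is constant. *)
Definition layered (w : nat -> nat) n :=
  forall i k, i < k -> k < n -> w k < w i -> w i + i = w k + k.

Definition avoids_231_312 n (s : 'S_n) :=
  avoids s [:: 2; 3; 1] && avoids s [:: 3; 1; 2].

Lemma contains3_occurrence n (s : 'S_n) a b c :
  contains s [:: a; b; c] -> exists i k j, [/\ i < k < j, j < n &
    [/\ (wnth s i < wnth s k) = (a < b), (wnth s k < wnth s j) = (b < c),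
        (wnth s k < wnth s i) = (b < a) & (wnth s j < wnth s i) = (c < a)]].
Proof.
case/existsP => f /forallP f_occ.
have occ (x y : 'I_3) : ((x < y)%N -> f x < f y) /\
    (wnth s (f x) < wnth s (f y)) = (nth 0 [:: a; b; c] x < nth 0 [:: a; b; c] y).
  by have /forallP/(_ y)/andP[/implyP ? /eqP] := f_occ x; rewrite !wnth_ord.
have [lt01 e01] := occ ord0 (inord 1); have [lt12 e12] := occ (inord 1) (inord 2).
have [_ e10] := occ (inord 1) ord0; have [_ e20] := occ (inord 2) ord0.
move: lt01 lt12 e01 e12 e10 e20; rewrite /= !inordK // => lt01 lt12.
exists (f ord0), (f (inord 1)), (f (inord 2)).
by rewrite lt01 // lt12 //; split.
Qed.

Lemma layered_avoids n (s : 'S_n) : layered (wnth s) n -> avoids_231_312 s.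
Proof.
move=> lay; apply/andP; split; apply/negP.
- case/contains3_occurrence => i [k [j [/andP[lt_ik lt_kj] lt_jn [e_ik _ _ e_ji]]]].
  have := lay i j (ltn_trans lt_ik lt_kj) lt_jn; rewrite e_ji => /(_ erefl).
  have := lay k j lt_kj lt_jn; move: e_ik; lia.
- case/contains3_occurrence => i [k [j [/andP[lt_ik lt_kj] lt_jn [_ e_kj e_ki e_ji]]]].
  have := lay i j (ltn_trans lt_ik lt_kj) lt_jn; rewrite e_ji => /(_ erefl).
  have := lay i k lt_ik (ltn_trans lt_kj lt_jn); rewrite e_ki => /(_ erefl).
  move: e_kj; lia.
Qed.

Lemma occurrence_contains3 n (s : 'S_n) a b c i k j : i < k < j -> j < n ->
  (forall x y : 'I_3, let pos := nth i [:: i; k; j] in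
     (wnth s (pos x) < wnth s (pos y)) = (nth 0 [:: a; b; c] x < nth 0 [:: a; b; c] y)) ->
  contains s [:: a; b; c].
Proof.
move=> /andP[lt_ik lt_kj] lt_jn occ; have lt_kn := ltn_trans lt_kj lt_jn.
have lt_in := ltn_trans lt_ik lt_kn.
apply/existsP; exists [ffun x : 'I_3 => nth (Ordinal lt_in)
  [:: Ordinal lt_in; Ordinal lt_kn; Ordinal lt_jn] x].
apply/forallP => x; apply/forallP => y; rewrite !ffunE -!wnth_ord.
have := occ x y; case: x y => [[|[|[|?]]] ?] [[|[|[|?]]] ?] //= ->.
all: by rewrite eqxx ?andbT //=; lia.
Qed.

Lemma contains_231 n (s : 'S_n) i k j : i < k < j -> j < n ->
  wnth s j < wnth s i < wnth s k -> contains s [:: 2; 3; 1].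
Proof.
move=> ikj lt_jn lt_w; apply: occurrence_contains3 ikj lt_jn _.
by case=> [[|[|[|?]]] ?] [[|[|[|?]]] ?] //=; lia.
Qed.

Lemma contains_312 n (s : 'S_n) i k j : i < k < j -> j < n ->
  wnth s k < wnth s j < wnth s i -> contains s [:: 3; 1; 2].
Proof.
move=> ikj lt_jn lt_w; apply: occurrence_contains3 ikj lt_jn _.
by case=> [[|[|[|?]]] ?] [[|[|[|?]]] ?] //=; lia.
Qed.

Section AvoidersAreLayered.
Variables (n : nat) (s : 'S_n).
Hypothesis no231 : ~~ contains s [:: 2; 3; 1].
Hypothesis no312 : ~~ contains s [:: 3; 1; 2].
Local Notation w := (wnth s).

Lemma inversion_bounds i k j : i < k < j -> j < n -> w j < w i -> w j < w k < w i.
Proof.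
move=> ikj lt_jn lt_ji; have /andP[lt_ik lt_kj] := ikj.
have lt_kn := ltn_trans lt_kj lt_jn; have lt_in := ltn_trans lt_ik lt_kn.
have ne_ki : w k <> w i by move/wnth_inj => /(_ lt_kn lt_in); lia.
have ne_kj : w k <> w j by move/wnth_inj => /(_ lt_kn lt_jn); lia.
have not_lt_ik : ~ w i < w k.
  by move=> lt_w; case/negP: no231; apply: contains_231 ikj lt_jn _; lia.
have not_lt_kj : ~ w k < w j.
  by move=> lt_w; case/negP: no312; apply: contains_312 ikj lt_jn _; lia.
lia.
Qed.

Lemma descent_in_inversion i l j : i <= l -> l < j -> j < n -> w j < w i ->
  w l.+1 < w l.
Proof.
move=> le_il lt_lj lt_jn lt_ji; have lt_l1n : l.+1 < n by lia.
have lt_l1i : w l.+1 < w i.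
  have [lt_l1j|->//] : l.+1 < j \/ l.+1 = j by lia.
  by case/andP: (@inversion_bounds i l.+1 j ltac:(lia) lt_jn lt_ji).
case: (ltngtP (w l.+1) (w l)) => [//|lt_ll1|/wnth_inj]; last by move/(_ lt_l1n); lia.
have [lt_il|eq_il] : i < l \/ i = l by lia.
  by case/negP: no312; apply: (@contains_312 _ _ i l l.+1) lt_l1n _; lia.
by move: lt_l1i lt_ll1; rewrite eq_il; lia.
Qed.

Lemma descent_by_one l : l.+1 < n -> w l.+1 < w l -> w l = (w l.+1).+1.
Proof.
move=> lt_l1n lt_w; have lt_ln : l < n by lia.
have [lt_gap|->//] : (w l.+1).+1 < w l \/ (w l.+1).+1 = w l by lia.
have lt_y : (w l.+1).+1 < n by have := wnth_lt s lt_ln; lia.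
have [m lt_mn e_m] := wnth_onto s lt_y.
case: (ltngtP m l) => [lt_ml|lt_lm|eq_ml]; last by move: e_m; rewrite eq_ml; lia.
- by case/negP: no231; apply: (@contains_231 _ _ m l l.+1) lt_l1n _; lia.
- case: (ltngtP m l.+1) => [|lt_l1m|eq_ml1]; [lia| |by move: e_m; rewrite eq_ml1; lia].
  by case/negP: no312; apply: (@contains_312 _ _ l l.+1 m) lt_mn _; lia.
Qed.

Lemma avoids_layered_perm : layered w n.
Proof.
move=> i j lt_ij lt_jn lt_ji.
suff shift d : i + d <= j -> w i + i = w (i + d) + (i + d).
  by have := shift (j - i); rewrite subnKC ?(ltnW lt_ij) // => ->.
elim: d => [|d IH] le_dj; first by rewrite addn0.
rewrite IH 1?addnS; last lia.
have := @descent_by_one (i + d) ltac:(lia).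
have := @descent_in_inversion i (i + d) j (leq_addr _ _) ltac:(lia) lt_jn lt_ji.
lia.
Qed.
End AvoidersAreLayered.

Lemma avoids_layered n (s : 'S_n) : avoids_231_312 s -> layered (wnth s) n.
Proof. by case/andP=> no231 no312; apply: avoids_layered_perm. Qed.

Lemma count_iota_add (P : pred nat) a b :
  count P (iota 0 (a + b)) = count P (iota 0 a) + count (fun i => P (a + i)) (iota 0 b).
Proof. by rewrite iotaD count_cat add0n -[in iota a b](addn0 a) iotaDl count_map. Qed.

Lemma all_iota_add (P : pred nat) a b :
  all P (iota 0 (a + b)) = all P (iota 0 a) && all (fun i => P (a + i)) (iota 0 b).
Proof. by rewrite iotaD all_cat add0n -[in iota a b](addn0 a) iotaDl all_map. Qed.

Lemma count_iota_none (P : pred nat) a :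
  (forall i, i < a -> ~~ P i) -> count P (iota 0 a) = 0.
Proof.
move=> notP; rewrite (eq_in_count (a2 := pred0)) ?count_pred0 // => i.
by rewrite mem_iota => /notP/negbTE.
Qed.

Lemma count_iota_all (P : pred nat) a : (forall i, i < a -> P i) -> count P (iota 0 a) = a.
Proof.
move=> Ptrue; rewrite (eq_in_count (a2 := predT)) ?count_predT ?size_iota // => i.
by rewrite mem_iota => /Ptrue.
Qed.

Lemma eq_in_count_iota (P Q : pred nat) a : (forall i, i < a -> P i = Q i) ->
  count P (iota 0 a) = count Q (iota 0 a).
Proof. by move=> eqPQ; apply: eq_in_count => i; rewrite mem_iota => /eqPQ. Qed.

Lemma eq_in_all_iota (P Q : pred nat) a b : (forall i, a <= i < a + b -> P i = Q i) ->
  all P (iota a b) = all Q (iota a b).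
Proof. by move=> eqPQ; apply: eq_in_all => i; rewrite mem_iota => /eqPQ. Qed.

Lemma all_iota_true (P : pred nat) a b : (forall i, a <= i < a + b -> P i) ->
  all P (iota a b).
Proof. by move=> Ptrue; apply/allP => i; rewrite mem_iota => /Ptrue. Qed.

Lemma all_iota_false (P : pred nat) a b k : a <= k < a + b -> ~~ P k ->
  all P (iota a b) = false.
Proof. by move=> k_in notPk; apply/negbTE/allPn; exists k; rewrite ?mem_iota. Qed.

Definition ascw (w : nat -> nat) n := count (fun i => w i < w i.+1) (iota 0 n.-1).
Definition desw (w : nat -> nat) n := count (fun i => w i > w i.+1) (iota 0 n.-1).
Definition lrmaxw (w : nat -> nat) n :=
  count (fun i => all (fun k => w k < w i) (iota 0 i)) (iota 0 n).
Definition lrminw (w : nat -> nat) n :=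
  count (fun i => all (fun k => w k > w i) (iota 0 i)) (iota 0 n).
Definition rlmaxw (w : nat -> nat) n :=
  count (fun i => all (fun k => w k < w i) (iota i.+1 (n - i.+1))) (iota 0 n).
Definition rlminw (w : nat -> nat) n :=
  count (fun i => all (fun k => w k > w i) (iota i.+1 (n - i.+1))) (iota 0 n).

Definition cons_layer j (w : nat -> nat) i := if i < j then j.-1 - i else j + w (i - j).

Lemma cons_layer_lo j w i : i < j -> cons_layer j w i = j.-1 - i.
Proof. by move=> lt_ij; rewrite /cons_layer lt_ij. Qed.

Lemma cons_layer_hi j w i : j <= i -> cons_layer j w i = j + w (i - j).
Proof. by move=> le_ji; rewrite /cons_layer ltnNge le_ji. Qed.

Lemma cons_layer_add j w i : cons_layer j w (j + i) = j + w i.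
Proof. by rewrite cons_layer_hi ?leq_addr // addKn. Qed.

Section ConsLayerStatistics.
Variables (j' : nat) (w : nat -> nat).
Local Notation j := j'.+1.
Local Notation g := (cons_layer j w).

Lemma cons_layer_bottom : g j' = 0.
Proof. by rewrite cons_layer_lo // subnn. Qed.

Lemma cons_layer_next : g j = j + w 0.
Proof. by rewrite cons_layer_hi // subnn. Qed.

Lemma ascw_cons_layer m : 0 < m -> ascw g (j + m) = (ascw w m).+1.
Proof.
case: m => // m _; rewrite /ascw (_ : (j + m.+1).-1 = j' + (1 + m)); last lia.
rewrite count_iota_add count_iota_none ?add0n; last first.
  by move=> i lt_ij'; rewrite !cons_layer_lo; lia.
rewrite count_iota_add /= !addn0 cons_layer_bottom cons_layer_next add1n.
congr _.+1; apply: eq_in_count_iota => i _.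
by rewrite add1n -addSnnS -addnS !cons_layer_add ltn_add2l.
Qed.

Lemma desw_cons_layer m : 0 < m -> desw g (j + m) = desw w m + j'.
Proof.
case: m => // m _; rewrite /desw (_ : (j + m.+1).-1 = j' + (1 + m)); last lia.
rewrite count_iota_add count_iota_all; last first.
  by move=> i lt_ij'; rewrite !cons_layer_lo; lia.
rewrite count_iota_add /= !addn0 cons_layer_bottom cons_layer_next add0n.
rewrite addnC; congr (_ + _); apply: eq_in_count_iota => i _.
by rewrite add1n -addSnnS -addnS !cons_layer_add ltn_add2l.
Qed.

Lemma lrmaxw_cons_layer m : lrmaxw g (j + m) = (lrmaxw w m).+1.
Proof.
rewrite -[(lrmaxw w m).+1]add1n /lrmaxw count_iota_add; congr (_ + _).
  rewrite -[iota 0 j]/(iota 0 (1 + j')) count_iota_add [X in _ + X]count_iota_none //.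
  by move=> i lt_i; rewrite (@all_iota_false _ _ _ 0) // !cons_layer_lo; lia.
apply: eq_in_count_iota => i _; rewrite all_iota_add all_iota_true /=; last first.
  by move=> k lt_k; rewrite cons_layer_lo ?cons_layer_add; lia.
by apply: eq_in_all_iota => k lt_k; rewrite !cons_layer_add ltn_add2l.
Qed.

Lemma lrminw_cons_layer m : lrminw g (j + m) = j.
Proof.
rewrite /lrminw count_iota_add count_iota_all; last first.
  by move=> i lt_ij; apply: all_iota_true => k lt_k; rewrite !cons_layer_lo; lia.
rewrite count_iota_none ?addn0 // => i _.
by rewrite (@all_iota_false _ _ _ 0) // cons_layer_add cons_layer_lo //; lia.
Qed.

Lemma rlmaxw_cons_layer m : 0 < m -> rlmaxw g (j + m) = rlmaxw w m.
Proof.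
move=> m_gt0; rewrite /rlmaxw count_iota_add count_iota_none ?add0n; last first.
  move=> i lt_ij; rewrite (@all_iota_false _ _ _ j) //; first lia.
  by rewrite cons_layer_next (cons_layer_lo _ lt_ij); lia.
apply: eq_in_count_iota => i _; rewrite -addnS subnDl iotaDl all_map.
by apply: eq_all => k /=; rewrite !cons_layer_add ltn_add2l.
Qed.

Lemma rlminw_cons_layer m : 0 < m -> rlminw g (j + m) = (rlminw w m).+1.
Proof.
move=> m_gt0; rewrite -[(rlminw w m).+1]add1n /rlminw count_iota_add; congr (_ + _).
  rewrite -[in iota 0 j](addn1 j') count_iota_add count_iota_none /=.
    rewrite !addn0 all_iota_true // => k lt_k.
    by rewrite cons_layer_bottom cons_layer_hi; lia.
  move=> i lt_ij'; rewrite (@all_iota_false _ _ _ i.+1) //; first lia.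
  by rewrite !cons_layer_lo; lia.
apply: eq_in_count_iota => i _; rewrite -addnS subnDl iotaDl all_map.
by apply: eq_all => k /=; rewrite !cons_layer_add ltn_add2l.
Qed.

Lemma ascw_layer : ascw g j = 0.
Proof. by rewrite /ascw count_iota_none // => i lt_i; rewrite !cons_layer_lo; lia. Qed.

Lemma desw_layer : desw g j = j'.
Proof. by rewrite /desw count_iota_all // => i lt_i; rewrite !cons_layer_lo; lia. Qed.

Lemma rlmaxw_layer : rlmaxw g j = j.
Proof.
rewrite /rlmaxw count_iota_all // => i lt_i; apply: all_iota_true => k lt_k.
by rewrite !cons_layer_lo; lia.
Qed.

Lemma rlminw_layer : rlminw g j = 1.
Proof.
rewrite /rlminw -[in iota 0 j](addn1 j') count_iota_add count_iota_none /= ?addn0 ?subnn //.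
move=> i lt_i; rewrite (@all_iota_false _ _ _ i.+1) //; first lia.
by rewrite !cons_layer_lo; lia.
Qed.
End ConsLayerStatistics.

Section LayeredHead.
Variables (n j : nat) (pi : 'S_n).
Hypotheses (j_gt0 : 0 < j) (le_jn : j <= n).
Hypotheses (lay : layered (wnth pi) n) (pi0 : wnth pi 0 = j.-1).

Lemma layered_tail_wnth_ge i : j <= i -> i < n -> j <= wnth pi i.
Proof.
move=> le_ji lt_in; case: (ltngtP (wnth pi i) (wnth pi 0)) => [lt_w|lt_w|eq_w].
- by have := @lay 0 i ltac:(lia) lt_in lt_w; lia.
- lia.
- by have := wnth_inj lt_in (ltac:(lia) : 0 < n) eq_w; lia.
Qed.

Lemma layered_head_wnth i : i < j -> wnth pi i = j.-1 - i.
Proof.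
move=> lt_ij; have [->|i_gt0] := posnP i; first by rewrite pi0 subn0.
have [k lt_kn eq_k] := wnth_onto pi (ltac:(lia) : j.-1 - i < n).
have [k0|k_gt0] := posnP k; first by move: eq_k; rewrite k0 pi0; lia.
have := @lay 0 k k_gt0 lt_kn ltac:(lia); rewrite eq_k pi0 => eq_diag.
by rewrite (_ : i = k) ?eq_k //; lia.
Qed.
End LayeredHead.

Section ConsLayerPerm.
Variables (n j : nat) (le_jn : j <= n).

Lemma cons_layer_lt (sigma : 'S_(n - j)) i : i < n -> cons_layer j (wnth sigma) i < n.
Proof.
rewrite /cons_layer; case: ifP => lt_ij lt_in; first lia.
by have := @wnth_lt _ sigma (i - j) ltac:(lia); lia.
Qed.

Lemma cons_layer_inj (sigma : 'S_(n - j)) i k : i < n -> k < n ->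
  cons_layer j (wnth sigma) i = cons_layer j (wnth sigma) k -> i = k.
Proof.
rewrite /cons_layer => lt_in lt_kn; case: ifP => lt_ij; case: ifP => lt_kj; try lia.
move=> eq_w.
by have := @wnth_inj _ sigma (i - j) (k - j) ltac:(lia) ltac:(lia) ltac:(lia); lia.
Qed.

Definition cons_layer_perm (sigma : 'S_(n - j)) : 'S_n :=
  perm_of_fun (@cons_layer_lt sigma) (@cons_layer_inj sigma).

Lemma wnth_cons_layer_perm sigma i : i < n ->
  wnth (cons_layer_perm sigma) i = cons_layer j (wnth sigma) i.
Proof. exact: wnth_perm_of_fun. Qed.

Lemma cons_layer_perm_inj : injective cons_layer_perm.
Proof.
move=> s1 s2 eq_s; apply: eq_perm_wnth => i lt_i.
have := wnth_cons_layer_perm s1 (i := j + i) ltac:(lia).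
by rewrite eq_s wnth_cons_layer_perm ?cons_layer_add; lia.
Qed.

Lemma layered_cons_layer_perm sigma :
  layered (wnth sigma) (n - j) -> layered (wnth (cons_layer_perm sigma)) n.
Proof.
move=> lay i k lt_ik lt_kn.
rewrite !wnth_cons_layer_perm ?(ltn_trans lt_ik) // /cons_layer.
case: ifP => lt_ij; case: ifP => lt_kj; try lia.
by move=> lt_w; have := lay (i - j) (k - j) ltac:(lia) ltac:(lia) ltac:(lia); lia.
Qed.

Lemma layered_cons_layer_perm_surj (pi : 'S_n) : 0 < j -> layered (wnth pi) n ->
  wnth pi 0 = j.-1 ->
  exists2 sigma : 'S_(n - j), layered (wnth sigma) (n - j) & pi = cons_layer_perm sigma.
Proof.
move=> j_gt0 lay pi0; have tail_ge := layered_tail_wnth_ge j_gt0 le_jn lay pi0.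
pose g i := wnth pi (i + j) - j.
have g_lt i : i < n - j -> g i < n - j.
  by move=> lt_i; have := @wnth_lt _ pi (i + j) ltac:(lia); rewrite /g; lia.
have g_inj i k : i < n - j -> k < n - j -> g i = g k -> i = k.
  move=> lt_i lt_k; rewrite /g => eq_g.
  have ge_i := tail_ge (i + j) ltac:(lia) ltac:(lia).
  have ge_k := tail_ge (k + j) ltac:(lia) ltac:(lia).
  by have := @wnth_inj _ pi (i + j) (k + j) ltac:(lia) ltac:(lia) ltac:(lia); lia.
exists (perm_of_fun g_lt g_inj).
  move=> i k lt_ik lt_k; rewrite !wnth_perm_of_fun /g; try lia.
  have ge_i := tail_ge (i + j) ltac:(lia) ltac:(lia).
  have ge_k := tail_ge (k + j) ltac:(lia) ltac:(lia).
  by have := lay (i + j) (k + j) ltac:(lia) ltac:(lia); lia.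
apply: eq_perm_wnth => i lt_in; rewrite wnth_cons_layer_perm // /cons_layer.
case: ifP => [|/negbT]; first exact: layered_head_wnth.
rewrite -leqNgt => le_ji; rewrite wnth_perm_of_fun /g ?subnK //; try lia.
by have := tail_ge i le_ji lt_in; lia.
Qed.
End ConsLayerPerm.

Local Open Scope ring_scope.

Definition weight (R : comNzRingType) (p q u v s t : R) (w : nat -> nat) n : R :=
  p ^+ ascw w n * q ^+ desw w n * u ^+ lrmaxw w n * v ^+ rlmaxw w n
    * s ^+ lrminw w n * t ^+ rlminw w n.

Lemma Fcoef_weight (R : comNzRingType) (p q u v s t : R) n :
  Fcoef p q u v s t n
  = \sum_(pi : 'S_n | avoids_231_312 pi) weight p q u v s t (wnth pi) n.
Proof. by []. Qed.

Lemma eq_weight (R : comNzRingType) (p q u v s t : R) (w1 w2 : nat -> nat) n :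
  (forall i, (i < n)%N -> w1 i = w2 i) ->
  weight p q u v s t w1 n = weight p q u v s t w2 n.
Proof.
move=> eq_w; rewrite /weight /ascw /desw /lrmaxw /lrminw /rlmaxw /rlminw.
congr (_ ^+ _ * _ ^+ _ * _ ^+ _ * _ ^+ _ * _ ^+ _ * _ ^+ _).
all: apply: eq_in_count_iota => i lt_i.
all: try (apply: eq_in_all_iota => k lt_k).
all: by rewrite !eq_w //; lia.
Qed.

Section ConsLayerWeight.
Variables (R : comNzRingType) (p q u v s t : R) (j' : nat) (w : nat -> nat).
Local Notation j := j'.+1.
Local Notation g := (cons_layer j w).

Lemma weight_cons_layer m : (0 < m)%N ->
  weight p q u v s t g (j + m) = s ^+ j * q ^+ j' * (p * u * t) * weight p q u v 1 t w m.
Proof.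
move=> m_gt0; rewrite /weight ascw_cons_layer // desw_cons_layer // lrmaxw_cons_layer.
rewrite lrminw_cons_layer rlmaxw_cons_layer // rlminw_cons_layer // expr1n.
by rewrite !exprS exprD; ring.
Qed.

Lemma weight_layer : weight p q u v s t g j = u * t * q ^+ j' * (s * v) ^+ j.
Proof.
rewrite /weight ascw_layer desw_layer rlmaxw_layer rlminw_layer exprMn.
have := lrmaxw_cons_layer j' w 0; have := lrminw_cons_layer j' w 0; rewrite addn0 => -> ->.
by rewrite expr0 !expr1; ring.
Qed.
End ConsLayerWeight.

Lemma sum_avoiders_head (R : nmodType) n c (lt_cn : (c < n)%N) (F : 'S_n -> R) :
  \sum_(pi : 'S_n | avoids_231_312 pi && (wnth pi 0 == c)%N) F pi
  = \sum_(sigma : 'S_(n - c.+1)%N | avoids_231_312 sigma) F (cons_layer_perm lt_cn sigma).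
Proof.
rewrite -big_filter -[RHS]big_filter -(big_map (cons_layer_perm lt_cn) xpredT).
apply: perm_big; apply: uniq_perm.
- exact: filter_uniq (index_enum_uniq _).
- by rewrite map_inj_uniq ?filter_uniq ?index_enum_uniq //; exact: cons_layer_perm_inj.
move=> pi; rewrite mem_filter mem_index_enum andbT; apply/andP/mapP.
- case=> /avoids_layered lay /eqP pi0.
  have [sigma lay_sigma ->] := layered_cons_layer_perm_surj lt_cn (ltn0Sn c) lay pi0.
  by exists sigma; rewrite // mem_filter mem_index_enum layered_avoids.
- case=> sigma; rewrite mem_filter mem_index_enum andbT => /avoids_layered lay ->.
  split; first exact/layered_avoids/layered_cons_layer_perm.
  by rewrite wnth_cons_layer_perm ?cons_layer_lo ?subn0 //; lia.
Qed.

Lemma sum_avoiders_nil (R : nmodType) m (F : 'S_m -> R) : m = 0%N ->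
  \sum_(sigma : 'S_m | avoids_231_312 sigma) F sigma = F 1%g.
Proof.
move=> m0; apply: big_pred1 => sigma /=.
have -> : sigma = 1%g by apply/permP => i; have := ltn_ord i; rewrite {2}m0.
by rewrite eqxx; apply: layered_avoids => i k _ lt_km; lia.
Qed.

Section Recurrence.
Variables (R : comNzRingType) (p q u v s t : R).

Lemma Fcoef0 : Fcoef p q u v s t 0 = 1.
Proof. by rewrite Fcoef_weight sum_avoiders_nil // /weight !expr0 !mulr1. Qed.

Lemma Fcoef_rec n :
  Fcoef p q u v s t n.+1 = u * t * q ^+ n * (s * v) ^+ n.+1
   + \sum_(c < n) s ^+ c.+1 * q ^+ c * (p * u * t) * Fcoef p q u v 1 t (n - c).
Proof.
have head_eq (pi : 'S_n.+1) c : (pi ord0 == c :> nat) = (wnth pi 0 == c)%N.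
  by rewrite -(wnth_ord pi ord0).
rewrite Fcoef_weight (partition_big (fun pi : 'S_n.+1 => pi ord0) predT) //=.
rewrite big_ord_recr /= addrC; congr (_ + _).
  rewrite (eq_bigl _ _ (fun pi => congr1 (andb _) (head_eq pi n))).
  rewrite (sum_avoiders_head (ltnSn n)) sum_avoiders_nil ?subnn //.
  by rewrite (eq_weight _ _ _ _ _ _ (wnth_cons_layer_perm _ _)) weight_layer.
apply: eq_bigr => c _; have lt_cn : (c < n.+1)%N by apply: leqW.
rewrite (eq_bigl _ _ (fun pi => congr1 (andb _) (head_eq pi c))).
rewrite (sum_avoiders_head lt_cn) Fcoef_weight big_distrr /=.
apply: eq_bigr => sigma _.
rewrite (eq_weight _ _ _ _ _ _ (wnth_cons_layer_perm lt_cn sigma)).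
move: (wnth sigma) => w; rewrite -{1}(subnKC lt_cn) weight_cons_layer //.
by have := ltn_ord c; lia.
Qed.
End Recurrence.

Section CongruenceModX.
Variables (R : comNzRingType) (N : nat).

Definition eqmodX (P Q : {poly R}) := forall i, (i <= N)%N -> P`_i = Q`_i.

Lemma eqmodX_equiv : Equivalence eqmodX.
Proof.
split=> [P i _ // | P Q eqPQ i le_iN | P Q S eqPQ eqQS i le_iN]; first by rewrite eqPQ.
by rewrite eqPQ // eqQS.
Qed.

Lemma eqmodXD : Proper (eqmodX ==> eqmodX ==> eqmodX) +%R.
Proof. by move=> P1 Q1 eq1 P2 Q2 eq2 i le_iN; rewrite !coefD eq1 // eq2. Qed.

Lemma eqmodXM : Proper (eqmodX ==> eqmodX ==> eqmodX) *%R.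
Proof.
move=> P1 Q1 eq1 P2 Q2 eq2 i le_iN; rewrite !coefM; apply: eq_bigr => k _.
have le_kN : (k <= N)%N by rewrite (leq_trans _ le_iN) // -ltnS.
by rewrite eq1 ?eq2 // (leq_trans (leq_subr _ _) le_iN).
Qed.

Definition geom (a : R) : {poly R} := \poly_(i < N.+1) a ^+ i.

Lemma geomK a : eqmodX ((1 - a%:P * 'X) * geom a) 1.
Proof.
move=> i le_iN; rewrite mulrBl mul1r coefB -mulrA coefCM coefXM coef1 coef_poly.
case: i le_iN => [|i] le_iN /=; first by rewrite expr0 mulr0 subr0.
by rewrite coef_poly ltnS le_iN ltnW // exprS subrr.
Qed.
End CongruenceModX.

#[local] Existing Instance eqmodX_equiv.
#[local] Existing Instance eqmodXD.
#[local] Existing Instance eqmodXM.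

Lemma eqmodX_clear_geom (R : comNzRingType) N (a b c d : R) (f h : {poly R}) :
  eqmodX N f (a%:P * 'X * geom N c + b%:P * 'X * geom N d * h) ->
  eqmodX N ((1 - c%:P * 'X) * (1 - d%:P * 'X) * f)
           (a%:P * 'X * (1 - d%:P * 'X) + b%:P * 'X * (1 - c%:P * 'X) * h).
Proof.
move=> ->.
have -> : (1 - c%:P * 'X) * (1 - d%:P * 'X)
            * (a%:P * 'X * geom N c + b%:P * 'X * geom N d * h)
          = a%:P * 'X * (1 - d%:P * 'X) * ((1 - c%:P * 'X) * geom N c)
            + b%:P * 'X * (1 - c%:P * 'X) * h * ((1 - d%:P * 'X) * geom N d) by ring.
by rewrite !geomK !mulr1.
Qed.

Section GeneratingFunction.
Variables (R : comNzRingType) (N : nat) (p q u v t : R).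

Definition Fseries (s : R) : {poly R} := \poly_(i < N.+1) Fcoef p q u v s t i.

Lemma Fseries_rec s : eqmodX N (Fseries s - 1)
  ((t * u * s * v)%:P * 'X * geom N (q * s * v)
   + (p * u * t * s)%:P * 'X * geom N (q * s) * (Fseries 1 - 1)).
Proof.
move=> i le_iN; rewrite -!mulrA coefB coefD !coefCM !coefXM coef1 coef_poly ltnS le_iN.
case: i le_iN => [|i] lt_iN /=; first by rewrite Fcoef0 subrr !mulr0 addr0.
rewrite subr0 Fcoef_rec coefM big_ord_recr /= subnn coefB coef1 coef_poly /=.
rewrite [(Fseries 1)`_0]coef_poly /= Fcoef0 subrr mulr0 addr0 ltnS (ltnW lt_iN).
rewrite big_distrr /=; congr (_ + _); first by rewrite !exprMn !exprS; ring.
apply: eq_bigr => c _; have lt_ci := ltn_ord c.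
rewrite coef_poly ltnS (ltnW (ltn_trans lt_ci lt_iN)) coefB coef_poly coef1.
rewrite ifT; last lia.
by rewrite subn_eq0 leqNgt lt_ci /= subr0 !exprMn !exprS; ring.
Qed.

Local Notation x := ('X : {poly R}).
Local Notation Dv := (1 - (q * v)%:P * x).
Local Notation D1 := (1 - q%:P * x - (p * u * t)%:P * x).

Lemma Fseries1_eq :
  eqmodX N (Dv * D1 * (Fseries 1 - 1)) ((t * u * v)%:P * x * (1 - q%:P * x)).
Proof.
have := eqmodX_clear_geom (Fseries_rec 1); rewrite !mulr1 => F1_eq.
have -> : Dv * D1 * (Fseries 1 - 1) = Dv * (1 - q%:P * x) * (Fseries 1 - 1)
    - (p * u * t)%:P * x * Dv * (Fseries 1 - 1) by ring.
by rewrite F1_eq addrK.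
Qed.

Lemma Dpoly_Fseries s : eqmodX N (Dpoly p q u v s t * Fseries s) (Apoly p q u v s t).
Proof.
have -> : Dpoly p q u v s t * Fseries s = Dpoly p q u v s t
    + Dv * D1 * ((1 - (q * s * v)%:P * x) * (1 - (q * s)%:P * x) * (Fseries s - 1)).
  by rewrite /Dpoly !polyCM; ring.
rewrite (eqmodX_clear_geom (Fseries_rec s)).
have -> : forall a b : {poly R}, Dpoly p q u v s t + Dv * D1 * (a + b * (Fseries 1 - 1))
    = Dpoly p q u v s t + Dv * D1 * a + b * (Dv * D1 * (Fseries 1 - 1)).
  by move=> a b; ring.
rewrite Fseries1_eq /Dpoly /Apoly /= !polyCM => i _.
by apply: (congr1 (fun P : {poly R} => P`_i)); ring.
Qed.
End GeneratingFunction.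

Theorem theorem7 (R : comNzRingType) (p q u v s t : R) (N : nat) :
  \sum_(i < N.+1) (Dpoly p q u v s t)`_i * Fcoef p q u v s t (N - i)
  = (Apoly p q u v s t)`_N.
Proof.
rewrite -(@Dpoly_Fseries R N p q u v t s N (leqnn N)) coefM; apply: eq_bigr => i _.
by rewrite coef_poly ltnS leq_subr.
Qed.
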